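(* Let $m\in\mathbb N$. Let $\mathbf X=(X_1,\dots,X_n)$ be (possibly dependent) component lifetimes and $\mathbf Y_i=(Y_{i1},\dots,Y_{in})$, $i=1,\dots,m$, be vectors of spare lifetimes, all $X_j$ and $Y_{ij}$ identically distributed as $X$. Let $T_C=\tau(\mathbf Z)$, where $Z_j=\max\{X_j,Y_{1j},\dots,Y_{mj}\}$ with $X_j,Y_{1j},\dots,Y_{mj}$ independent, and $T_S=\max\{\tau(\mathbf X),\tau(\mathbf Y_1),\dots,\tau(\mathbf Y_m)\}$ with $\tau(\mathbf X),\tau(\mathbf Y_1),\dots,\tau(\mathbf Y_m)$ independent, where $\tau$ is a coherent structure and $\tau(\mathbf X),\tau(\mathbf Y_i),\tau(\mathbf Z)$ all have the same domination function $h$; thus $\bar F_{T_C}(x)=h\big(1-(1-\bar F_X(x))^{m+1}\big)$ and $F_{T_S}(x)=\big(1-h(\bar F_X(x))\big)^{m+1}$. Let $R(p)=(1-p)h'(p)/(1-h(p))$, $p\in(0,1)$. Then $T_S\underset{b}{\prec}T_C$ holds if and only if $R(p)/R\big(1-(1-p)^{m+1}\big)$ is increasing in $p\in(0,1)$.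
   Context: All random variables are non-negative and absolutely continuous with support $[0,\infty)$. For a random variable $W$: density $f_W$, cdf $F_W$, survival $\bar F_W=1-F_W$, reversed hazard rate $\tilde r_W=f_W/F_W$. $U\underset{b}{\prec}V$ means $\tilde r_U(x)/\tilde r_V(x)$ is decreasing in $x\ge0$. The domination function $h:[0,1]\to[0,1]$ of a coherent system whose components have common marginal survival function $\bar G$ is the function (depending on structure and survival copula) with system reliability $h(\bar G(x))$; it is increasing, continuous, $h(0)=0$, $h(1)=1$, assumed differentiable. ''Increasing'' means non-decreasing, ''decreasing'' means non-increasing. *)

From HB Require Import structures.
From mathcomp Require Import all_boot all_order all_algebra.
From mathcomp Require Import all_classical all_reals all_analysis.
Set Implicit Arguments. Unset Strict Implicit. Unset Printing Implicit Defensive.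
Import Order.TTheory GRing.Theory Num.Theory.
Import numFieldNormedType.Exports.
Local Open Scope classical_set_scope.
Local Open Scope ring_scope.

Section Defs.
Variable R : realType.

(* Standing assumptions on the common marginal cdf F = F_X: absolutely
   continuous with support [0, +oo); its density is its derivative, assumed
   positive on (0, +oo) so that reversed hazard ratios are well defined. *)
Definition lifetime_cdf (F : R -> R) : Prop :=
  [/\ (forall x, x <= 0 -> F x = 0),
      continuous F,
      (forall x y, 0 <= x -> x < y -> F x < F y),
      F x @[x --> +oo] --> (1 : R)
    & (forall x, 0 < x -> derivable F x 1 /\ 0 < derive1 F x)].

Definition domination_fun (h : R -> R) : Prop :=
  [/\ (forall p q, 0 <= p -> p <= q -> q <= 1 -> h p <= h q),
      {within `[0, 1], continuous h},
      h 0 = 0, h 1 = 1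
    & (forall p, 0 < p < 1 -> derivable h p 1)].

Definition rhr (Fw : R -> R) (x : R) : R := derive1 Fw x / Fw x.

(* U <_b V : rhr U / rhr V decreasing (on the open half-line, where the
   reversed hazard rates are defined) *)
Definition b_order (FU FV : R -> R) : Prop :=
  forall x y, 0 < x -> x <= y -> rhr FU y / rhr FV y <= rhr FU x / rhr FV x.

Definition sf (F : R -> R) (x : R) : R := 1 - F x.
Definition cdf_TS (h : R -> R) (m : nat) (F : R -> R) (x : R) : R :=
  (1 - h (sf F x)) ^+ m.+1.
Definition cdf_TC (h : R -> R) (m : nat) (F : R -> R) (x : R) : R :=
  1 - h (1 - (1 - sf F x) ^+ m.+1).

Definition Rfun (h : R -> R) (p : R) : R := (1 - p) * derive1 h p / (1 - h p).

End Defs.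

From HB Require Import structures.
From mathcomp Require Import all_boot all_order all_algebra.
From mathcomp Require Import all_classical all_reals all_analysis.
From mathcomp Require Import ring.
Import Order.TTheory GRing.Theory Num.Theory.
Import numFieldNormedType.Exports.
Set Implicit Arguments. Unset Strict Implicit.
Local Open Scope ring_scope.

(* Write p = sf F x and f = F'. Differentiating the two cdfs gives
   rhr T_S x = (m+1) f/F x * R(p)  and  rhr T_C x = (m+1) f/F x * R(1-(1-p)^(m+1)),
   so the ratio of reversed hazard rates at x is G(sf F x), where G is the
   function of the statement. As sf F is a decreasing bijection of (0,+oo)
   onto (0,1), the ratio decreases in x exactly when G increases in p. *)

Lemma nonincreasing_comp_decr_ontoP (R : realDomainType) (phi g : R -> R) :
  (forall x y, 0 < x -> x < y -> phi y < phi x) ->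
  (forall x, 0 < x -> 0 < phi x < 1) ->
  (forall p, 0 < p -> p < 1 -> exists2 x, 0 < x & phi x = p) ->
  (forall x y, 0 < x -> x <= y -> g (phi y) <= g (phi x)) <->
  (forall p q, 0 < p -> p <= q -> q < 1 -> g p <= g q).
Proof.
move=> phi_decr phi01 phi_onto.
split=> [g_phi_decr p q p_gt0 pq q_lt1 | g_incr x y x_gt0].
- have [x x_gt0 phixq] := phi_onto q (lt_le_trans p_gt0 pq) q_lt1.
  have [y y_gt0 phiyp] := phi_onto p p_gt0 (le_lt_trans pq q_lt1).
  rewrite -phixq -phiyp; apply: g_phi_decr; rewrite // leNgt; apply/negP => yx.
  by have := phi_decr _ _ y_gt0 yx; rewrite phixq phiyp ltNge pq.
- rewrite le_eqVlt => /predU1P[<- // | xy].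
  have /andP[phiy_gt0 _] := phi01 _ (lt_trans x_gt0 xy).
  have /andP[_ phix_lt1] := phi01 _ x_gt0.
  by apply: g_incr => //; apply/ltW/phi_decr.
Qed.

Lemma one_sub_exprS_one_sub_in01 (R : numDomainType) (p : R) (n : nat) :
  0 < p < 1 -> 0 < 1 - (1 - p) ^+ n.+1 < 1.
Proof.
move=> /andP[p_gt0 p_lt1].
have q_gt0 : 0 < 1 - p by rewrite subr_gt0.
have q_lt1 : 1 - p < 1 by rewrite gtrBl.
by rewrite subr_gt0 exprn_ilt1 ?ltW // gtrBl exprn_gt0.
Qed.

Section LifetimeCdf.
Variables (R : realType) (F : R -> R).
Hypothesis HF : lifetime_cdf F.

Lemma lifetime_cdf_gt0 x : 0 < x -> 0 < F x.
Proof. by case: HF => F0 _ Fincr _ _ x_gt0; rewrite -(F0 0) //; apply: Fincr. Qed.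

Lemma lifetime_cdf_lt1 x : 0 <= x -> F x < 1.
Proof.
case: HF => _ _ Fincr F1 _ x_ge0.
have x1_ge0 : 0 <= x + 1 by rewrite addr_ge0.
have Fx_lt : F x < F (x + 1) by apply: Fincr; rewrite ?ltrDl.
apply: (lt_le_trans Fx_lt); rewrite leNgt; apply/negP => F1_lt.
have /filter_ex [z [xz Fz]] : \forall z \near +oo, x + 1 < z /\ F z < F (x + 1).
  near=> z; split; near: z.
  - exact/nbhs_pinfty_gt/num_real.
  - exact: cvgr_lt F1 _ F1_lt.
by have := Fincr _ _ x1_ge0 xz; rewrite ltNge (ltW Fz).
Unshelve. all: by end_near.
Qed.

Lemma lifetime_cdf_onto v : 0 < v -> v < 1 -> exists2 x, 0 < x & F x = v.
Proof.
case: HF => F0 Fcont _ F1 _ v_gt0 v_lt1.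
have [b b_gt0 Fb] : exists2 b, 0 < b & v < F b.
  have /filter_ex [b [? ?]] : \forall b \near +oo, 0 < b /\ v < F b.
    near=> b; split; near: b.
    - exact/nbhs_pinfty_gt/num_real.
    - exact: cvgr_gt F1 _ v_lt1.
  by exists b.
have [c c0b Fc] : exists2 c, c \in `[0, b] & F c = v.
  apply: IVT; [exact: ltW | exact: continuous_subspaceT |].
  by rewrite F0 // ge_min le_max (ltW v_gt0) (ltW Fb) orbT.
exists c => //; rewrite lt_neqAle; move: c0b; rewrite in_itv /= => /andP[-> _].
by rewrite andbT; apply: contraTneq v_gt0 => c0; rewrite -Fc -c0 F0 ?ltxx.
Unshelve. all: by end_near.
Qed.

Lemma sf_decr x y : 0 < x -> x < y -> sf F y < sf F x.
Proof. by case: HF => _ _ Fincr _ _ x_gt0 xy; rewrite /sf ltrD2l ltrN2 Fincr ?ltW. Qed.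

Lemma sf_in01 x : 0 < x -> 0 < sf F x < 1.
Proof.
move=> x_gt0.
by rewrite /sf subr_gt0 gtrBl lifetime_cdf_lt1 ?lifetime_cdf_gt0 ?ltW.
Qed.

Lemma sf_onto p : 0 < p -> p < 1 -> exists2 x, 0 < x & sf F x = p.
Proof.
move=> p_gt0 p_lt1.
have [x x_gt0 Fx] : exists2 x, 0 < x & F x = 1 - p.
  by apply: lifetime_cdf_onto; rewrite ?subr_gt0 ?gtrBl.
by exists x; rewrite // /sf Fx subKr.
Qed.

End LifetimeCdf.

Section ReversedHazardRates.
Variables (R : realType) (h F : R -> R) (m : nat) (x : R).
Hypotheses (dF : derivable F x 1) (Fx_neq0 : F x != 0).

Let f := derive1 F x.
Let p := sf F x.
Let q := 1 - (1 - sf F x) ^+ m.+1.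

Let is_derive_F : is_derive x 1 F f.
Proof. by rewrite /f derive1E; apply: derivableP. Qed.

Let is_derive_sf : is_derive x 1 (sf F) (- f).
Proof.
have -> : sf F = cst 1 - F by apply/funext.
by apply: is_derive_eq (is_deriveB _ is_derive_F) _; rewrite sub0r.
Qed.

Let sfE : 1 - sf F x = F x.
Proof. exact: subKr. Qed.

Lemma rhr_cdf_TS : derivable h p 1 ->
  rhr (cdf_TS h m F) x = m.+1%:R * f / F x * Rfun h p.
Proof.
move=> /derivableP dhp; set b := 1 - h p.
have dTS : is_derive x 1 (cdf_TS h m F) (m.+1%:R * b ^+ m * (derive1 h p * f)).
  have -> : cdf_TS h m F = (cst 1 - h \o sf F) ^+ m.+1.
    by apply/funext => y; rewrite /cdf_TS exprfctE.
  apply: is_derive_eq (is_deriveX m.+1 (is_deriveB (is_derive_cst (1 : R) x 1)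
    (is_derive1_comp dhp is_derive_sf))) _.
  by rewrite !fctE /= -/b derive1E sub0r mulrN opprK.
rewrite /rhr derive1E derive_val /Rfun /cdf_TS -/p -/b sfE.
(* If [b = 0] both sides vanish, as [_ / 0 = 0]. *)
have [b0|b0] := eqVneq b 0.
  by rewrite b0 [0 ^+ m.+1]expr0n /= !(invr0, mulr0).
by rewrite exprSr; field; rewrite b0 Fx_neq0 expf_neq0.
Qed.

Lemma rhr_cdf_TC : derivable h q 1 ->
  rhr (cdf_TC h m F) x = m.+1%:R * f / F x * Rfun h q.
Proof.
move=> /derivableP dhq; set c := 1 - h q.
pose sf_max y := 1 - (1 - sf F y) ^+ m.+1.
have dsf_max : is_derive x 1 sf_max (- (m.+1%:R * F x ^+ m * f)).
  have -> : sf_max = cst 1 - (cst 1 - sf F) ^+ m.+1 by apply/funext => y; rewrite !fctE.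
  apply: is_derive_eq (is_deriveB (is_derive_cst (1 : R) x 1) (is_deriveX m.+1
       (is_deriveB (is_derive_cst (1 : R) x 1) is_derive_sf))) _.
  by rewrite !fctE sfE !sub0r opprK.
have dTC : is_derive x 1 (cdf_TC h m F) (derive1 h q * (m.+1%:R * F x ^+ m * f)).
  have -> : cdf_TC h m F = cst 1 - h \o sf_max by apply/funext => y; rewrite !fctE.
  apply: is_derive_eq (is_deriveB (is_derive_cst (1 : R) x 1)
    (is_derive1_comp (f := h) (g := sf_max) dhq dsf_max)) _.
  by rewrite derive1E sub0r mulrN opprK.
rewrite /rhr derive1E derive_val /Rfun /cdf_TC -/q -/c {2}/q sfE subKr.
have [c0|c0] := eqVneq c 0; first by rewrite c0 !(invr0, mulr0).
by rewrite exprS; field; rewrite c0 Fx_neq0.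
Qed.

End ReversedHazardRates.

Lemma rhr_ratio_cdf_TS_TC (R : realType) (h F : R -> R) (m : nat) (x : R) :
  derivable F x 1 -> 0 < derive1 F x -> 0 < F x ->
  derivable h (sf F x) 1 -> derivable h (1 - (1 - sf F x) ^+ m.+1) 1 ->
  rhr (cdf_TS h m F) x / rhr (cdf_TC h m F) x
  = Rfun h (sf F x) / Rfun h (1 - (1 - sf F x) ^+ m.+1).
Proof.
move=> dF f_gt0 Fx_gt0 dhp dhq; have Fx_neq0 := lt0r_neq0 Fx_gt0.
rewrite rhr_cdf_TS // rhr_cdf_TC // invfM mulrACA divff ?mul1r //.
by rewrite gt_eqF // !mulr_gt0 ?invr_gt0.
Qed.

Theorem theorem4p2 (R : realType) (m : nat) (h F : R -> R) :
  domination_fun h -> lifetime_cdf F ->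
  (b_order (cdf_TS h m F) (cdf_TC h m F) <->
   (forall p q : R, 0 < p -> p <= q -> q < 1 ->
      Rfun h p / Rfun h (1 - (1 - p) ^+ m.+1)
      <= Rfun h q / Rfun h (1 - (1 - q) ^+ m.+1))).
Proof.
move=> [_ _ _ _ dh] HF; have [_ _ _ _ dF] := HF.
pose G p := Rfun h p / Rfun h (1 - (1 - p) ^+ m.+1).
have ratioE x : 0 < x -> rhr (cdf_TS h m F) x / rhr (cdf_TC h m F) x = G (sf F x).
  move=> x_gt0; have [dFx f_gt0] := dF x x_gt0; have p01 := sf_in01 HF x_gt0.
  apply: rhr_ratio_cdf_TS_TC => //; [exact: lifetime_cdf_gt0 | exact: dh |].
  exact/dh/one_sub_exprS_one_sub_in01.
apply: iff_trans (nonincreasing_comp_decr_ontoP G (sf_decr HF) (sf_in01 HF) (sf_onto HF)).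
split=> G_mono x y x_gt0 xy; have y_gt0 := lt_le_trans x_gt0 xy.
- by rewrite -!ratioE //; apply: G_mono.
- by rewrite !ratioE //; apply: G_mono.
Qed.
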